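(* Let $\alpha\in(0,1)$ be an irrational number with bounded partial quotients, and let $s_\alpha$ be a Sturmian word of angle $\alpha$. Then there exists a positive constant $C$ such that for every sufficiently large $n$, $\sum_{m\le n}\mathit{ASF}_{s_\alpha}(m)\ge Cn^2$.
   Context: Alphabet $\{a,b\}$; $\{x\}=x-\lfloor x\rfloor$. For irrational $\alpha\in(0,1)$ and $\rho\in[0,1)$, the Sturmian word $s_{\alpha,\rho}=c_0c_1\cdots$ has $c_m=b$ if $\{\rho+m\alpha\}\in[0,1-\alpha)$ and $c_m=a$ otherwise (or with intervals $(0,1-\alpha]$ and $(1-\alpha,1]$); all these have the same set of factors, and $s_\alpha$ denotes any of them. $\alpha$ has bounded partial quotients if the sequence $(a_i)$ of its simple continued fraction expansion $\alpha=[a_0;a_1,a_2,\dots]$ is bounded. An abelian square is a word $v_1v_2$ with $v_1,v_2$ having the same numbers of each letter; $\mathit{ASF}_w(m)$ is the number of distinct factors of $w$ of length $m$ that are abelian squares. *)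

From HB Require Import structures.
From mathcomp Require Import all_boot all_order all_algebra.
From mathcomp Require Import boolp reals.
Set Implicit Arguments. Unset Strict Implicit. Unset Printing Implicit Defensive.
Import Order.TTheory GRing.Theory Num.Theory.
Local Open Scope ring_scope.

Definition letter := bool.
Definition la : letter := false.
Definition lb : letter := true.

Definition frac {R : realType} (x : R) : R := x - (Num.floor x)%:~R.

Fixpoint cf_rem {R : realType} (alpha : R) (i : nat) : R :=
  match i with
  | 0 => alpha
  | i'.+1 => frac (cf_rem alpha i')^-1
  end.

Definition partial_quotient {R : realType} (alpha : R) (i : nat) : int :=
  match i with
  | 0 => Num.floor alpha
  | i'.+1 => Num.floor (cf_rem alpha i')^-1
  end.

Definition bounded_partial_quotients {R : realType} (alpha : R) : Prop :=
  exists B : int, forall i, partial_quotient alpha i <= B.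

Definition sturmian {R : realType} (alpha rho : R) (conv : bool) (m : nat) : letter :=
  let x := frac (rho + m%:R * alpha) in
  if conv then asbool ((0 < x) && (x <= 1 - alpha))
  else asbool ((0 <= x) && (x < 1 - alpha)).

Definition is_factor (w : nat -> letter) (u : seq letter) : Prop :=
  exists i : nat, u = [seq w (i + j)%N | j <- iota 0 (size u)].

Definition abelian_square (u : seq letter) : Prop :=
  exists v1 v2 : seq letter, u = v1 ++ v2 /\ forall c : letter, count_mem c v1 = count_mem c v2.

Definition ASF (w : nat -> letter) (m : nat) : nat :=
  #|[set t : m.-tuple letter | asbool (is_factor w t /\ abelian_square t)]|.

From Pilot Require Import Defs.
From HB Require Import structures.
From mathcomp Require Import all_boot all_order all_algebra.
From mathcomp Require Import boolp reals.
From mathcomp Require Import ring lra zify.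
Import Order.TTheory GRing.Theory Num.Theory.
Local Open Scope ring_scope.
Set Implicit Arguments. Unset Strict Implicit.

(* Write {x} for x mod 1 and y_i = {rho + i alpha}.  When alpha has bounded
   partial quotients, the continued fraction expansion shows that the points
   {j alpha}, j < M, meet every interval of length D/M, for a constant D.
   The Sturmian word is a mechanical word: the number of a's in the factor of
   length l at position i is the increment of floor (or ceil) of rho + m alpha
   between m = i and m = i + l.  Hence the factor of length 2k at i is an
   abelian square as soon as {k alpha} < 1/4 and y_i < 1/2, and two factors of
   length 2k whose positions have y_i and y_i' more than D/(2k+1) apart differ.
   So every such length 2k carries about k/D distinct abelian squares, and
   about n/D lengths 2k <= n have {k alpha} < 1/4; summing over them gives a
   lower bound quadratic in n. *)

Record cf_state (R : Type) := CFState { t0 : R; t1 : R; q0 : int; q1 : int; p0 : int; p1 : int }.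

Section ContinuedFraction.
Variables (R : realType) (alpha : R).
Hypothesis alpha01 : 0 < alpha < 1.
Hypothesis alpha_irr : irrational alpha.

(* [cf alpha k] holds two consecutive convergents p0/q0 and p1/q1 of alpha
   together with the distances t0 = |q0 alpha - p0| > t1 = |q1 alpha - p1|;
   one step of the Euclidean algorithm on (t0, t1) is one step of the
   continued fraction expansion. *)
Fixpoint cf (k : nat) : cf_state R :=
  if k is k'.+1 then
    let s := cf k' in let a := Num.floor (t0 s / t1 s) in
    CFState (t1 s) (t0 s - a%:~R * t1 s) (q1 s) (q0 s + a * q1 s)
            (p1 s) (p0 s + a * p1 s)
  else CFState 1 alpha 0 1 1 0.

Definition cf_quotient (k : nat) : int := Num.floor (t0 (cf k) / t1 (cf k)).

Lemma cf_dist k : exists2 sg : R, sg = 1 \/ sg = -1 &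
  (q0 (cf k))%:~R * alpha - (p0 (cf k))%:~R = sg * t0 (cf k) /\
  (q1 (cf k))%:~R * alpha - (p1 (cf k))%:~R = - sg * t1 (cf k).
Proof.
elim: k => [|k [sg sgE [E0 E1]]]; first by exists (-1); [right | split=> /=; lra].
exists (- sg); first by case: sgE => ->; [right | left]; rewrite ?opprK.
split=> /=; first by rewrite E1.
set a := Num.floor _; rewrite !rmorphD !rmorphM /=.
suff -> : ((q0 (cf k))%:~R + a%:~R * (q1 (cf k))%:~R) * alpha
          - ((p0 (cf k))%:~R + a%:~R * (p1 (cf k))%:~R)
        = ((q0 (cf k))%:~R * alpha - (p0 (cf k))%:~R)
          + a%:~R * ((q1 (cf k))%:~R * alpha - (p1 (cf k))%:~R) by rewrite E0 E1; ring.
ring.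
Qed.

Lemma cf_det k : t0 (cf k) * (q1 (cf k))%:~R + t1 (cf k) * (q0 (cf k))%:~R = 1.
Proof.
elim: k => [|k IH] /=; first by rewrite mulr1 mulr0 addr0.
by rewrite !rmorphD !rmorphM /= -[RHS]IH; ring.
Qed.

Lemma cf_pos k : [/\ 0 < t1 (cf k) < t0 (cf k), 1 <= q1 (cf k), 0 <= q0 (cf k),
  q0 (cf k) <= q1 (cf k) & k.+1%:Z <= q0 (cf k) + q1 (cf k)].
Proof.
elim: k => [|k [/andP[t1_gt0 t01] q1_ge1 q0_ge0 q01 qk]] /=; first by split=> //; lra.
set a := Num.floor _.
have /andP[] := floor_itv (t0 (cf k) / t1 (cf k)).
rewrite -/a ler_pdivlMr // ltr_pdivrMr // intrD => a_le a_gt.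
have a_ge1 : 1 <= a by rewrite floor_ge_int ler_pdivlMr // mul1r ltW.
have q1'_ge1 : 1 <= q0 (cf k) + a * q1 (cf k) by nia.
split=> //; try nia.
rewrite lt0r subr_ge0 a_le andbT; apply/andP; split; last by lra.
apply/eqP => t1'0; apply: alpha_irr; apply/rationalP.
have [sg _ [_]] := cf_dist k.+1; rewrite /= -/a t1'0 mulr0 => E.
exists (p0 (cf k) + a * p1 (cf k)), (absz (q0 (cf k) + a * q1 (cf k))%R).
rewrite natr_absz ger0_norm; last by lia.
have q_neq0 : (q0 (cf k) + a * q1 (cf k))%:~R != 0 :> R by rewrite intr_eq0; lia.
by apply: (mulIf q_neq0); rewrite mulfVK //; lra.
Qed.

Lemma cf_remE k : cf_rem alpha k = t1 (cf k) / t0 (cf k).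
Proof.
elim: k => [|k IH] /=; first by rewrite divr1.
have [/andP[t1_gt0 _] _ _ _ _] := cf_pos k.
by rewrite IH invf_div /Defs.frac mulrBl mulfK ?gt_eqF.
Qed.

Lemma cf_quotient_bounded : bounded_partial_quotients alpha ->
  exists B : nat, forall k, cf_quotient k <= B%:Z.
Proof.
move=> [b bP]; exists `|b|%N => k.
have := bP k.+1; rewrite /= cf_remE invf_div -/(cf_quotient k).
by move/le_trans; apply; lia.
Qed.

End ContinuedFraction.

Section OrbitDensity.
Variables (R : realType) (alpha : R).

Definition orbit_dense (N : nat) (L : R) := forall a : R,
  exists2 j : nat, (j < N)%N & exists z : int, a <= j%:R * alpha + z%:~R < a + L.

Lemma orbit_dense_widen N N' L L' :
  orbit_dense N L -> (N <= N')%N -> L <= L' -> orbit_dense N' L'.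
Proof.
move=> dense leNN' leLL' a; have [j ltjN [z /andP[lo hi]]] := dense a.
by exists j; [exact: leq_trans leNN' | exists z; apply/andP; split; lra].
Qed.

Lemma orbit_point_shift N (m q t j : nat) (p z : int) : (j < N)%N -> (t <= m)%N ->
  exists2 j' : nat, (j' < N + m * q)%N & exists z' : int,
    j'%:R * alpha + z'%:~R = j%:R * alpha + z%:~R + t%:R * (q%:R * alpha - p%:~R).
Proof.
move=> ltjN letm; exists (j + t * q)%N.
  by rewrite -addSn; apply: leq_add ltjN (leq_mul letm (leqnn q)).
exists (z - t%:Z * p); rewrite natrD natrM rmorphB rmorphM /=.
by rewrite -[(t%:Z)%:~R]/(t%:R); ring.
Qed.

Lemma orbit_dense_step_up N L (q m : nat) (p : int) (d : R) :
  orbit_dense N L -> 0 < d -> q%:R * alpha - p%:~R = d ->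
  m.+1%:R * d <= L -> orbit_dense (N + m * q) (L - m%:R * d).
Proof.
move=> dense d_gt0 Ed mdL a.
have [j ltjN [z /andP[lo hi]]] := dense (a - m%:R * d).
set s := j%:R * alpha + z%:~R - (a - m%:R * d).
have s_ge0 : 0 <= s by rewrite /s; lra.
have /andP[] := truncn_itv (divr_ge0 s_ge0 (ltW d_gt0)).
set u := Num.truncn _; rewrite ler_pdivlMr // ltr_pdivrMr // -natr1 => us su.
have [j' ltj'N [z' E]] := orbit_point_shift q p z ltjN (leq_subr u m).
exists j' => //; exists z'; rewrite E Ed; rewrite -natr1 in mdL; rewrite /s in us su.
have [leum|ltmu] := leqP u m; first by rewrite natrB // mulrBl; apply/andP; split; lra.
have : m%:R * d <= u%:R * d by rewrite ler_pM2r // ler_nat ltnW.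
have -> : (m - u)%N = 0%N by apply/eqP; rewrite subn_eq0 ltnW.
by rewrite mul0r addr0 => mu; apply/andP; split; lra.
Qed.

Lemma orbit_dense_step_down N L (q m : nat) (p : int) (d : R) :
  orbit_dense N L -> 0 < d -> q%:R * alpha - p%:~R = - d ->
  m.+1%:R * d <= L -> orbit_dense (N + m * q) (L - m%:R * d).
Proof.
move=> dense d_gt0 Ed mdL a.
have [j ltjN [z /andP[lo hi]]] := dense a.
set s := j%:R * alpha + z%:~R - a.
have s_ge0 : 0 <= s by rewrite /s; lra.
have /andP[] := truncn_itv (divr_ge0 s_ge0 (ltW d_gt0)).
set u := Num.truncn _; rewrite ler_pdivlMr // ltr_pdivrMr // -natr1 => us su.
have [j' ltj'N [z' E]] := orbit_point_shift q p z ltjN (geq_minl m u).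
exists j' => //; exists z'; rewrite E Ed; rewrite -natr1 in mdL; rewrite /s in us su.
have [lemu|ltum] := leqP m u.
  have : m%:R * d <= u%:R * d by rewrite ler_pM2r // ler_nat.
  by move=> mu; apply/andP; split; lra.
by apply/andP; split; lra.
Qed.

Lemma orbit_dense_step N L (q m : nat) (p : int) (d : R) :
  orbit_dense N L -> 0 < d ->
  q%:R * alpha - p%:~R = d \/ q%:R * alpha - p%:~R = - d ->
  m.+1%:R * d <= L -> orbit_dense (N + m * q) (L - m%:R * d).
Proof.
move=> dense d_gt0 [] Ed.
  exact: orbit_dense_step_up dense d_gt0 Ed.
exact: orbit_dense_step_down dense d_gt0 Ed.
Qed.

Lemma orbit_dense_shrink N L (q : nat) (p : int) (d : R) :
  orbit_dense N L -> 0 < d <= L ->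
  q%:R * alpha - p%:~R = d \/ q%:R * alpha - p%:~R = - d ->
  exists m : nat, [/\ orbit_dense (N + m * q) (L - m%:R * d),
                      d <= L - m%:R * d < 2 * d & m.+1%:R * d <= L].
Proof.
move=> dense /andP[d_gt0 leLd] Ed.
have /andP[] := truncn_itv (divr_ge0 (le_trans (ltW d_gt0) leLd) (ltW d_gt0)).
set u := Num.truncn _; rewrite ler_pdivlMr // ltr_pdivrMr // => udL Lud.
have [m uE] : exists m, u = m.+1.
  exists u.-1; rewrite prednK // lt0n.
  by apply: contraTneq Lud => ->; rewrite mul1r -leNgt.
rewrite uE in udL Lud; exists m; split => //; first exact: orbit_dense_step dense d_gt0 Ed udL.
by rewrite -!natr1 in udL Lud *; apply/andP; split; lra.
Qed.

Lemma orbit_dense_spread M (r : nat) (g c : R) : orbit_dense M g -> 0 < g ->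
  exists2 f : 'I_r -> nat * int,
    forall s, ((f s).1 < M)%N /\
      g <= c + (f s).1%:R * alpha + (f s).2%:~R < 2 * r%:R * g
  & forall s s' : 'I_r, (s < s')%N ->
      c + (f s).1%:R * alpha + (f s).2%:~R + g < c + (f s').1%:R * alpha + (f s').2%:~R.
Proof.
move=> dense g_gt0.
have pick (s : 'I_r) : exists jz : nat * int, (jz.1 < M)%N /\
    (2 * s%:R + 1) * g <= c + jz.1%:R * alpha + jz.2%:~R < (2 * s%:R + 2) * g.
  have [j ltjM [z /andP[lo hi]]] := dense ((2 * s%:R + 1) * g - c).
  by exists (j, z); split=> //=; apply/andP; split; lra.
have [f fP] := choice pick.
exists f => [s | s s' lt_ss'].
  have [ltM /andP[lo hi]] := fP s; split=> //.
  have : s%:R + 1 <= r%:R :> R by rewrite natr1 ler_nat.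
  have : 0 <= s%:R :> R by [].
  by move=> *; apply/andP; split; nra.
have [_ /andP[_ hi]] := fP s; have [_ /andP[lo _]] := fP s'.
have : s%:R + 1 <= s'%:R :> R by rewrite natr1 ler_nat.
by nra.
Qed.

End OrbitDensity.

Section BoundedQuotientsDensity.
Variables (R : realType) (alpha : R).
Hypothesis alpha01 : 0 < alpha < 1.
Hypothesis alpha_irr : irrational alpha.

Local Notation cf := (cf alpha).

Lemma orbit_dense_cf k : exists N : nat, exists L : R,
  [/\ orbit_dense alpha N L, N%:Z <= 4 * (q0 (cf k) + q1 (cf k))
    & t0 (cf k) <= L < 2 * t0 (cf k)].
Proof.
elim: k => [|k [N [L [dense leNq /andP[t0L Lt0]]]]].
  exists 1%N, 1; split=> //=; last by rewrite lexx /=; lra.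
  move=> a; exists 0%N => //; exists (Num.ceil a).
  by have := ceil_itv a; rewrite mul0r add0r intrB; lra.
have [/andP[t1_gt0 t01] q1_ge1 _ _ _] := cf_pos alpha01 alpha_irr k.
have [sg sgE [_ E1]] := cf_dist alpha k.
have dist1 : let d := (absz (q1 (cf k)))%:R * alpha - (p1 (cf k))%:~R in
    d = t1 (cf k) \/ d = - t1 (cf k).
  rewrite /= natr_absz gtr0_norm ?ltr0z; last by lia.
  by case: sgE E1 => -> ->; [right | left]; ring.
have t1L : 0 < t1 (cf k) <= L by rewrite t1_gt0; lra.
have [m [dense' L'_bound leL]] := orbit_dense_shrink dense t1L dist1.
exists (N + m * absz (q1 (cf k)))%N, (L - m%:R * t1 (cf k)); split=> //=.
set a := Num.floor _.
have /andP[_] := floor_itv (t0 (cf k) / t1 (cf k)); rewrite -/a ltr_pdivrMr // => t0a.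
have m_le : m%:Z <= 2 * a.
  have : m.+1%:R * t1 (cf k) < (2 * (a + 1))%:~R * t1 (cf k).
    by rewrite intrM intrD; lra.
  by rewrite ltr_pM2r // -[m.+1%:R]/((m.+1)%:Z)%:~R ltr_int; lia.
rewrite PoszD PoszM (_ : (absz (q1 (cf k)))%:Z = q1 (cf k)); last by lia.
nia.
Qed.

Lemma cf_index_for (M : nat) : (4 <= M)%N -> exists k,
  4 * (q0 (cf k) + q1 (cf k)) <= M%:Z < 4 * (q0 (cf k.+1) + q1 (cf k.+1)).
Proof.
move=> leM; pose P k := 4 * (q0 (cf k) + q1 (cf k)) <= M%:Z.
have P0 : exists k, P k by exists 0%N; rewrite /P /=; lia.
have leMP k : P k -> (k <= M)%N.
  by have [_ _ _ _ qk] := cf_pos alpha01 alpha_irr k; rewrite /P; lia.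
have [k Pk Pmax] := ex_maxnP P0 leMP.
by exists k; apply/andP; split=> //; rewrite ltNge; apply/negP => /Pmax; rewrite ltnn.
Qed.

Lemma orbit_dense_bpq : bounded_partial_quotients alpha ->
  exists D M0 : nat, (0 < D)%N /\
    forall M : nat, (M0 <= M)%N -> orbit_dense alpha M (D%:R / M%:R).
Proof.
move=> /(cf_quotient_bounded alpha01 alpha_irr) [B leB].
exists (8 * (B + 2))%N, 4%N; split=> [|M leM]; first by rewrite muln_gt0 addn_gt0 orbT.
have [k /andP[lekM ltMk]] := cf_index_for leM.
have [N [L [dense leNq /andP[t0L Lt0]]]] := orbit_dense_cf k.
apply: orbit_dense_widen dense _ _; first by lia.
have [/andP[t1_gt0 t01] q1_ge1 q0_ge0 q01 _] := cf_pos alpha01 alpha_irr k.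
have MqZ : M%:Z < 4 * (B%:Z + 2) * q1 (cf k).
  by have := leB k; rewrite /= in ltMk; rewrite /cf_quotient => leBk; nia.
have Mq : M%:R < 4 * (B%:R + 2) * (q1 (cf k))%:~R :> R.
  by move: MqZ; rewrite -(ltr_int R) !(intrM, intrD); lra.
have t0q1 : t0 (cf k) * (q1 (cf k))%:~R <= 1.
  have := cf_det alpha k; have : 0 <= t1 (cf k) * (q0 (cf k))%:~R.
    by rewrite mulr_ge0 ?ler0z // ltW.
  lra.
have M_gt0 : 0 < M%:R :> R by rewrite ltr0n; lia.
have L_ge0 : 0 <= L by lra.
rewrite ler_pdivlMr // natrM natrD.
have : L * M%:R <= 2 * t0 (cf k) * (4 * (B%:R + 2) * (q1 (cf k))%:~R).
  by apply: ler_pM; lra.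
have : 0 <= B%:R :> R by [].
nra.
Qed.

End BoundedQuotientsDensity.

Section FloorSteps.
Variable R : realType.

Lemma floorD_frac (x a : R) : 0 <= a < 1 ->
  Num.floor (x + a) - Num.floor x = (1 - a <= Defs.frac x).
Proof.
move=> /andP[a_ge0 a_lt1]; rewrite /Defs.frac.
have /andP[lo hi] := floor_itv x; set n := Num.floor x in lo hi *.
rewrite intrD in hi.
have [le1a|gt1a] := lerP (1 - a) (x - n%:~R).
  have -> : Num.floor (x + a) = n + 1 by apply: floor_def; rewrite !intrD; lra.
  by rewrite addrAC subrr.
have -> : Num.floor (x + a) = n by apply: floor_def; rewrite intrD; lra.
by rewrite subrr.
Qed.

Lemma ceilD_frac (x a : R) : 0 < a < 1 ->
  Num.ceil (x + a) - Num.ceil x = ~~ ((0 < Defs.frac x) && (Defs.frac x <= 1 - a)).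
Proof.
move=> /andP[a_gt0 a_lt1]; rewrite /Defs.frac.
have /andP[lo hi] := floor_itv x; set n := Num.floor x in lo hi *.
rewrite intrD in hi.
have [f0|f_gt0] := eqVneq (x - n%:~R) 0.
  have -> : Num.ceil x = n by apply: ceil_def; rewrite intrB; lra.
  have -> : Num.ceil (x + a) = n + 1 by apply: ceil_def; rewrite addrK intrD; lra.
  by rewrite f0 ltxx /= addrAC subrr.
have {}f_gt0 : 0 < x - n%:~R by rewrite lt0r f_gt0 subr_ge0.
have -> : Num.ceil x = n + 1 by apply: ceil_def; rewrite addrK intrD; lra.
rewrite f_gt0 /=; have [lefa|gtfa] := lerP (x - n%:~R) (1 - a).
  have -> : Num.ceil (x + a) = n + 1 by apply: ceil_def; rewrite addrK intrD; lra.
  by rewrite subrr.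
have -> : Num.ceil (x + a) = n + 1 + 1 by apply: ceil_def; rewrite addrK !intrD; lra.
by rewrite addrAC subrr.
Qed.

End FloorSteps.

Definition factor (u : nat -> letter) (i n : nat) : seq letter :=
  [seq u (i + j)%N | j <- iota 0 n].

Lemma size_factor u i n : size (factor u i n) = n.
Proof. by rewrite size_map size_iota. Qed.

Definition factor_tuple u i n : n.-tuple letter :=
  Tuple (introT eqP (size_factor u i n)).

Lemma factorD u i m n : factor u i (m + n) = factor u i m ++ factor u (i + m) n.
Proof.
rewrite /factor iotaD map_cat; congr (_ ++ _).
by rewrite add0n -[m in iota m]addn0 iotaDl -map_comp; apply: eq_map => j /=; rewrite addnA.
Qed.

Lemma take_factor u i m n : (m <= n)%N -> take m (factor u i n) = factor u i m.
Proof. by move=> le_mn; rewrite -map_take take_iota (minn_idPl le_mn). Qed.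

Lemma abelian_square_cat (v1 v2 : seq letter) : size v1 = size v2 ->
  count_mem la v1 = count_mem la v2 -> abelian_square (v1 ++ v2).
Proof.
move=> size12 count12; exists v1, v2; split=> // -[] //.
have count_b (v : seq letter) : count_mem lb v = (size v - count_mem la v)%N.
  by elim: v => [|[] v IH] //=; rewrite IH ?add1n ?add0n ?subSn ?count_size.
by rewrite !count_b size12 count12.
Qed.

Lemma ler_divn_ratio (R : realFieldType) (c D M : nat) : (0 < M)%N ->
  (c * (M %/ (c * D)))%:R * (D%:R / M%:R) <= 1 :> R.
Proof.
move=> M_gt0; rewrite mulrA ler_pdivrMr ?ltr0n // mul1r -natrM ler_nat.
by rewrite mulnAC mulnC leq_divM.
Qed.

Section SturmianFactors.
Variables (R : realType) (alpha rho : R) (conv : bool).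
Hypothesis alpha01 : 0 < alpha < 1.

Local Notation w := (sturmian alpha rho conv).

Definition cfloor (x : R) : int := if conv then Num.ceil x else Num.floor x.

Lemma cfloor_sub x x' (n n' : int) : 0 < x + n%:~R < 1 -> 0 < x' + n'%:~R < 1 ->
  cfloor x' - cfloor x = n - n'.
Proof.
suff cfloorE y (m : int) : 0 < y + m%:~R < 1 -> cfloor y = - m + conv.
  by move=> /cfloorE -> /cfloorE ->; lia.
move=> /andP[lo hi]; rewrite /cfloor; case: conv.
  by apply: ceil_def; rewrite addrK intrD intrN /= -[1%:~R]/1; apply/andP; split; lra.
by apply: floor_def; rewrite addr0 intrD intrN; apply/andP; split; lra.
Qed.

Lemma cfloor_succ m :
  cfloor (rho + m.+1%:R * alpha) - cfloor (rho + m%:R * alpha) = (w m == la).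
Proof.
rewrite -natr1 mulrDl mul1r addrA /cfloor /sturmian !asboolb eqbF_neg.
case/andP: alpha01 => a_gt0 a_lt1; case: conv; first by rewrite ceilD_frac.
rewrite floorD_frac; last by rewrite (ltW a_gt0).
have /andP[lo _] := floor_itv (rho + m%:R * alpha).
by rewrite /Defs.frac subr_ge0 lo /= -leNgt.
Qed.

Lemma count_a_factor i l : (count_mem la (factor w i l))%:Z =
  cfloor (rho + (i + l)%:R * alpha) - cfloor (rho + i%:R * alpha).
Proof.
elim: l => [|l IH]; first by rewrite addn0 subrr.
have := cfloor_succ (i + l).
by rewrite -[l.+1]addn1 factorD count_cat PoszD IH addn1 addnS /= !addn0; lia.
Qed.

Lemma factor_abelian_square (i k : nat) (Z z : int) :
  0 < rho + i%:R * alpha + Z%:~R < 1 / 2 -> 0 <= k%:R * alpha + z%:~R < 1 / 4 ->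
  abelian_square (factor w i (k + k)).
Proof.
move=> /andP[y_gt0 y_lt] /andP[x_ge0 x_lt].
have y0 : 0 < rho + i%:R * alpha + Z%:~R < 1 by apply/andP; split; lra.
have y1 : 0 < rho + (i + k)%:R * alpha + (Z + z)%:~R < 1.
  by rewrite natrD intrD; apply/andP; split; lra.
have y2 : 0 < rho + (i + k + k)%:R * alpha + (Z + z + z)%:~R < 1.
  by rewrite !natrD !intrD; apply/andP; split; lra.
rewrite factorD; apply: abelian_square_cat; first by rewrite !size_factor.
apply/eqP; rewrite -eqz_nat !count_a_factor (cfloor_sub y0 y1) (cfloor_sub y1 y2).
by apply/eqP; ring.
Qed.

Lemma factor_neq M g (i i' k : nat) (Z Z' : int) :
  orbit_dense alpha M g -> (M <= (k + k).+1)%N ->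
  0 < rho + i%:R * alpha + Z%:~R ->
  rho + i%:R * alpha + Z%:~R + g < rho + i'%:R * alpha + Z'%:~R ->
  rho + i'%:R * alpha + Z'%:~R < 1 ->
  factor w i (k + k) != factor w i' (k + k).
Proof.
move=> dense leM y_gt0 yy' y'_lt1; apply/eqP => E.
(* With y, y' the two points, the orbit point x lies in (- y', - y): the prefixes of
   length j then differ in their numbers of a's. *)
have [j ltjM [z /andP[lo hi]]] := dense (- (rho + i'%:R * alpha + Z'%:~R) +
  (rho + i'%:R * alpha + Z'%:~R - (rho + i%:R * alpha + Z%:~R) - g) / 2).
have le_jk : (j <= k + k)%N by rewrite -ltnS (leq_trans ltjM).
have y0 : 0 < rho + i%:R * alpha + Z%:~R < 1 by apply/andP; split; lra.
have y0' : 0 < rho + i'%:R * alpha + Z'%:~R < 1 by apply/andP; split; lra.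
have y1 : 0 < rho + (i + j)%:R * alpha + (Z + z + 1)%:~R < 1.
  by rewrite natrD !intrD; apply/andP; split; lra.
have y1' : 0 < rho + (i' + j)%:R * alpha + (Z' + z)%:~R < 1.
  by rewrite natrD intrD; apply/andP; split; lra.
have := congr1 (fun v => (count_mem la (take j v))%:Z) E.
rewrite /= !take_factor // !count_a_factor (cfloor_sub y0 y1) (cfloor_sub y0' y1').
by move=> counts_eq; clear -counts_eq; lia.
Qed.

Lemma ASF_double_ge (D M0 : nat) : (0 < D)%N ->
  (forall M : nat, (M0 <= M)%N -> orbit_dense alpha M (D%:R / M%:R)) ->
  forall (k : nat) (z : int), (M0 <= (k + k).+1)%N ->
  0 <= k%:R * alpha + z%:~R < 1 / 4 -> ((k + k).+1 %/ (4 * D) <= ASF w (k + k))%N.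
Proof.
move=> D_gt0 dense k z leM x_bound.
set M := (k + k).+1; set r := (M %/ (4 * D))%N.
have g_gt0 : 0 < D%:R / M%:R :> R by rewrite divr_gt0 ?ltr0n.
have rg : (4 * r)%:R * (D%:R / M%:R) <= 1 :> R by exact: ler_divn_ratio.
rewrite natrM in rg.
have [f f_in f_sep] := orbit_dense_spread r rho (dense M leM) g_gt0.
have y_in s : 0 < rho + (f s).1%:R * alpha + (f s).2%:~R < 1 / 2.
  by have [_ /andP[lo hi]] := f_in s; apply/andP; split; lra.
have fneq (s s' : 'I_r) : (s < s')%N -> factor w (f s).1 (k + k) != factor w (f s').1 (k + k).
  move=> lt_ss'; have /andP[y_gt0 _] := y_in s; have /andP[_ y'_lt] := y_in s'.
  by apply: factor_neq (dense M leM) (leqnn _) y_gt0 (f_sep s s' lt_ss') _; lra.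
pose T (s : 'I_r) := factor_tuple w (f s).1 (k + k).
have T_inj : injective T.
  move=> s s' /(congr1 val) /= E.
  case: (ltngtP s s') => [lt | lt | /val_inj //].
    by move/eqP: E; rewrite (negbTE (fneq _ _ lt)).
  by move/esym/eqP: E; rewrite (negbTE (fneq _ _ lt)).
rewrite -[X in (X <= _)%N]card_ord -(card_imset _ T_inj).
apply: subset_leq_card; apply/subsetP => _ /imsetP[s _ ->].
rewrite inE asboolE; split; first by exists (f s).1; rewrite size_tuple.
exact: factor_abelian_square (y_in s) x_bound.
Qed.

Lemma ASF_ge_many (D M0 K : nat) : (0 < D)%N ->
  (forall M : nat, (M0 <= M)%N -> orbit_dense alpha M (D%:R / M%:R)) ->
  (M0 <= K)%N -> (0 < K)%N ->
  exists h : 'I_(K %/ (8 * D)) -> nat, [/\ injective h,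
    forall s, (h s <= 4 * K)%N & forall s, (K %/ (8 * D) <= ASF w (h s))%N].
Proof.
move=> D_gt0 dense leK K_gt0; set r := (K %/ (8 * D))%N.
have g_gt0 : 0 < D%:R / K%:R :> R by rewrite divr_gt0 ?ltr0n.
have rg : (8 * r)%:R * (D%:R / K%:R) <= 1 :> R by exact: ler_divn_ratio.
rewrite natrM in rg.
have [f f_in f_sep] := orbit_dense_spread r (K%:R * alpha) (dense K leK) g_gt0.
have x_in s : 0 <= (K + (f s).1)%:R * alpha + (f s).2%:~R < 1 / 4.
  by have [_ /andP[lo hi]] := f_in s; rewrite natrD; apply/andP; split; lra.
exists (fun s => (K + (f s).1) + (K + (f s).1))%N; split.
- move=> s s' /= Ej; have {}Ej : (f s).1 = (f s').1 by lia.
  have /andP[lo hi] := x_in s; have /andP[lo' hi'] := x_in s'; rewrite Ej in lo hi.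
  have Ez : (f s).2 = (f s').2.
    have : (f s).2 - (f s').2 < 1 by rewrite -(ltr_int R) intrB; lra.
    have : (f s').2 - (f s).2 < 1 by rewrite -(ltr_int R) intrB; lra.
    lia.
  case: (ltngtP s s') => [lt_ss' | lt_s's | /val_inj //].
    by exfalso; have := f_sep _ _ lt_ss'; rewrite Ej Ez; lra.
  by exfalso; have := f_sep _ _ lt_s's; rewrite Ej Ez; lra.
- by move=> s; have [ltK _] := f_in s; lia.
move=> s; have [ltK _] := f_in s.
apply: leq_trans (ASF_double_ge D_gt0 dense _ (x_in s)); last by lia.
apply: leq_trans (leq_div2l _ _ _) (leq_div2r _ _); rewrite ?muln_gt0 ?D_gt0 //; lia.
Qed.

End SturmianFactors.

Lemma leq_sum_inj (n r b : nat) (F : nat -> nat) (h : 'I_r -> nat) : injective h ->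
  (forall s, h s <= n)%N -> (forall s, b <= F (h s))%N ->
  (r * b <= \sum_(m < n.+1) F m)%N.
Proof.
move=> h_inj le_hn le_bF; pose h' s : 'I_n.+1 := inord (h s).
have h'E s : h' s = h s :> nat by rewrite inordK ?ltnS.
have h'_inj : injective h' by move=> s s' /(congr1 (@nat_of_ord _)); rewrite !h'E => /h_inj.
rewrite (bigID (mem (h' @: setT))) /=; apply: leq_trans (leq_addr _ _).
rewrite big_imset /=; last by move=> s s' _ _ /h'_inj.
have : (\sum_(s in [set: 'I_r]) b <= \sum_(s in [set: 'I_r]) F (h' s))%N.
  by apply: leq_sum => s _; rewrite h'E.
by rewrite sum_nat_const cardsT card_ord.
Qed.

Lemma sqrn_le_divn (n d : nat) : (0 < d)%N -> (d <= n)%N ->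
  (n ^ 2 <= (2 * d) ^ 2 * (n %/ d) ^ 2)%N.
Proof.
move=> d_gt0 le_dn; have := divn_eq n d; have := ltn_pmod n d_gt0.
set q := (n %/ d)%N; set m := (n %% d)%N => lt_md n_eq.
have q_gt0 : (0 < q)%N by rewrite divn_gt0.
have : (n <= 2 * d * q)%N by nia.
by move=> le_n; rewrite -expnMn leq_exp2r.
Qed.

Unset Implicit Arguments. Set Strict Implicit.

Theorem theorem3 (R : realType) (alpha rho : R) (conv : bool) :
  0 < alpha < 1 -> (@irrational R alpha) -> bounded_partial_quotients alpha ->
  0 <= rho < 1 ->
  exists C : R, 0 < C /\
    exists N : nat, forall n : nat, (N <= n)%N ->
      C * n%:R ^+ 2 <= (\sum_(m < n.+1) ASF (sturmian alpha rho conv) m)%:R.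
Proof.
move=> alpha01 alpha_irr bpq _.
have [D [M0 [D_gt0 dense]]] := orbit_dense_bpq alpha01 alpha_irr bpq.
set d := (32 * D)%N; have d_gt0 : (0 < d)%N by rewrite muln_gt0.
have c_gt0 : (0 < (2 * d) ^ 2)%N by rewrite expn_gt0 muln_gt0 d_gt0.
exists ((2 * d) ^ 2)%:R^-1; split; first by rewrite invr_gt0 ltr0n.
exists (4 * M0 + d)%N => n le_n.
have [||h [h_inj h_le h_ASF]] := ASF_ge_many rho conv alpha01 D_gt0 dense (K := (n %/ 4)%N).
- by lia.
- by lia.
have le_hn s : (h s <= n)%N by have := h_le s; lia.
have := leq_sum_inj h_inj le_hn h_ASF.
rewrite -divnMA mulnA -/d => sum_ge.
rewrite mulrC ler_pdivrMr ?ltr0n // -natrX -natrM ler_nat.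
apply: leq_trans (sqrn_le_divn d_gt0 _) _; first by lia.
by rewrite mulnC leq_mul2r; apply/orP; right.
Qed.
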